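(* Let $P_{IV}\subset\mathbb{R}^6$ be the polytope of $\alpha=(\alpha_0,\dots,\alpha_5)$ defined by \[ \alpha_4+\alpha_5\ge1,\quad\alpha_r+\alpha_s\ge0\ (1\le r<s\le3),\quad\alpha_0+\alpha_r\ge0\ (r=4,5),\quad\sum_{r=0}^5\alpha_r=1. \] Then the vertices of $P_{IV}$ are the orbits under $S_1\times S_3\times S_2$ (with $S_3$ permuting $(\alpha_1,\alpha_2,\alpha_3)$ and $S_2$ permuting $(\alpha_4,\alpha_5)$) of the points $(0,0,0,0,0,1)$, $(-\frac12,-\frac12,\frac12,\frac12,\frac12,\frac12)$ and $(-1,0,0,0,1,1)$. *)

From HB Require Import structures.
From mathcomp Require Import all_boot all_order all_algebra all_fingroup.
Set Implicit Arguments. Unset Strict Implicit. Unset Printing Implicit Defensive.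
Import Order.TTheory GRing.Theory Num.Theory.
Local Open Scope ring_scope.

(* Coordinates alpha_0..alpha_5 of a point a : 'rV[R]_6 are a 0 i, i : 'I_6. *)
Definition coord {R : realFieldType} (a : 'rV[R]_6) (k : nat) : R := a 0 (inord k).

Definition P_IV {R : realFieldType} (a : 'rV[R]_6) : Prop :=
  [/\ 1 <= coord a 4 + coord a 5,
      (forall r s : 'I_6, (1 <= r)%N -> (r < s)%N -> (s <= 3)%N -> 0 <= a 0 r + a 0 s),
      0 <= coord a 0 + coord a 4,
      0 <= coord a 0 + coord a 5
    & \sum_(i < 6) a 0 i = 1].

Definition is_vertex {R : realFieldType} (P : 'rV[R]_6 -> Prop) (x : 'rV[R]_6) : Prop :=
  P x /\ forall (y z : 'rV[R]_6) (t : R), P y -> P z -> 0 < t -> t < 1 ->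
           x = t *: y + (1 - t) *: z -> y = z.

(* S_1 x S_3 x S_2 inside S_6: permutations fixing 0, preserving {1,2,3}
   and preserving {4,5}. *)
Definition block_perm (s : 'S_6) : Prop :=
  [/\ nat_of_ord (s (inord 0)) = 0%N,
      (forall i : 'I_6, (1 <= i <= 3)%N -> (1 <= s i <= 3)%N)
    & (forall i : 'I_6, (4 <= i)%N -> (4 <= s i)%N)].

Definition permute {R : realFieldType} (s : 'S_6) (a : 'rV[R]_6) : 'rV[R]_6 :=
  \row_i a 0 (s i).

Definition mkpt {R : realFieldType} (l : seq R) : 'rV[R]_6 := \row_(i < 6) nth 0 l i.

Definition v1 {R : realFieldType} : 'rV[R]_6 := mkpt [:: 0; 0; 0; 0; 0; 1].
Definition v2 {R : realFieldType} : 'rV[R]_6 :=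
  mkpt [:: - 2^-1; - 2^-1; 2^-1; 2^-1; 2^-1; 2^-1].
Definition v3 {R : realFieldType} : 'rV[R]_6 := mkpt [:: -1; 0; 0; 0; 1; 1].

From Pilot Require Import Defs.
From HB Require Import structures.
From mathcomp Require Import all_boot all_order all_algebra all_fingroup.
From mathcomp Require Import zify ring lra.
Set Implicit Arguments. Unset Strict Implicit. Unset Printing Implicit Defensive.
Import Order.TTheory GRing.Theory Num.Theory.
Local Open Scope ring_scope.
Local Notation coord := Defs.coord.

(* Each listed point v is exposed: it is the only point of P_IV at which five of the
   defining inequalities are tight, so the sum of their slacks is an affine function that
   is nonnegative on P_IV and vanishes only at v; and the symmetry group maps vertices to
   vertices.  Conversely, by symmetry a vertex x may be assumed to satisfy
   alpha_1 <= alpha_2, alpha_3 and alpha_4 <= alpha_5.  The slacks of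
   alpha_2 + alpha_3 >= 0, alpha_0 + alpha_5 >= 0 and alpha_4 + alpha_5 >= 1 cannot all
   vanish; if the slack l of the first (resp. second, third) is positive, then x - l v
   lies in the cone over P_IV for v = v2 (resp. v1, v3).  So x is a convex combination of
   v, with weight l, and a point of P_IV, which forces x = v. *)

(* The block of i in the partition {0} | {1, 2, 3} | {4, 5}, numbered 0, 1, 2. *)
Definition block_of (i : 'I_6) : nat := ((0 < i) + (3 < i))%N.

Lemma block_permE (s : 'S_6) : block_perm s <-> forall i, block_of (s i) = block_of i.
Proof.
rewrite /block_of; split=> [[s0 s13 s45] i | sb].
- have [i0|i_gt0] := posnP i.
    have -> : i = inord 0 by apply/val_inj; rewrite /= inordK.
    by rewrite s0 inordK.
  have [i_le3|i_gt3] := leqP i 3.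
    by have := s13 i; lia.
  by have := s45 i; lia.
- split=> [|i hi|i hi]; try by have := sb i; lia.
  by have := sb (inord 0); rewrite inordK //; lia.
Qed.

Lemma block_perm1 : block_perm (1 : 'S_6)%g.
Proof. by apply/block_permE => i; rewrite perm1. Qed.

Lemma block_permM (s t : 'S_6) : block_perm s -> block_perm t -> block_perm (s * t)%g.
Proof. by move=> /block_permE bs /block_permE bt; apply/block_permE => i; rewrite permM bt bs. Qed.

Lemma block_permV (s : 'S_6) : block_perm s -> block_perm (s^-1)%g.
Proof. by move=> /block_permE bs; apply/block_permE => i; rewrite -{2}(permKV s i) bs. Qed.

Lemma block_perm_tperm (i j : 'I_6) : block_of i = block_of j -> block_perm (tperm i j).
Proof. by move=> bij; apply/block_permE => k; case: tpermP => [->|->|]. Qed.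

Section P_IV_vertices.
Variable R : realFieldType.
Implicit Types (a b x y z w : 'rV[R]_6) (s t : 'S_6).

Lemma coordD a b k : coord (a + b) k = coord a k + coord b k.
Proof. by rewrite /coord mxE. Qed.

Lemma coordB a b k : coord (a - b) k = coord a k - coord b k.
Proof. by rewrite /coord !mxE. Qed.

Lemma coordZ (c : R) a k : coord (c *: a) k = c * coord a k.
Proof. by rewrite /coord mxE. Qed.

Lemma coord_mkpt (l : seq R) k : (k < 6)%N -> coord (mkpt l) k = nth 0 l k.
Proof. by move=> k_lt6; rewrite /coord mxE inordK. Qed.

Lemma coord_permute s a k : coord (permute s a) k = coord a (s (inord k)).
Proof. by rewrite /coord mxE inord_val. Qed.

Lemma coord_permute_tperm (i j k : nat) a : (i < 6)%N -> (j < 6)%N -> (k < 6)%N ->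
  coord (permute (tperm (inord i) (inord j)) a) k =
  coord a (if k == i then j else if k == j then i else k).
Proof.
move=> i_lt6 j_lt6 k_lt6; rewrite coord_permute; congr (coord a _).
have [->|k_neq_i] := eqVneq k i; first by rewrite tpermL inordK.
have [->|k_neq_j] := eqVneq k j; first by rewrite tpermR inordK.
by rewrite tpermD ?inordK // -val_eqE /= !inordK // eq_sym.
Qed.

Lemma eq_row6 a b :
  coord a 0 = coord b 0 -> coord a 1 = coord b 1 -> coord a 2 = coord b 2 ->
  coord a 3 = coord b 3 -> coord a 4 = coord b 4 -> coord a 5 = coord b 5 -> a = b.
Proof.
move=> e0 e1 e2 e3 e4 e5; apply/rowP => i; rewrite -[i]inord_val.
by case: i => [[|[|[|[|[|[|k]]]]]] ?].
Qed.

Lemma permute1 a : permute 1%g a = a.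
Proof. by apply/rowP => i; rewrite mxE perm1. Qed.

Lemma permuteM s t a : permute s (permute t a) = permute (s * t)%g a.
Proof. by apply/rowP => i; rewrite !mxE permM. Qed.

Lemma permuteK s a : permute s^-1%g (permute s a) = a.
Proof. by rewrite permuteM mulVg permute1. Qed.

Lemma permuteKV s a : permute s (permute s^-1%g a) = a.
Proof. by rewrite permuteM mulgV permute1. Qed.

Lemma permuteD s a b : permute s (a + b) = permute s a + permute s b.
Proof. by apply/rowP => i; rewrite !mxE. Qed.

Lemma permuteZ s (c : R) a : permute s (c *: a) = c *: permute s a.
Proof. by apply/rowP => i; rewrite !mxE. Qed.

(* The cone over P_IV cut at height m; P_IV itself is the slice m = 1. *)
Definition cone_IV (m : R) a : Prop :=
  m <= coord a 4 + coord a 5 /\ 0 <= coord a 1 + coord a 2 /\ 0 <= coord a 1 + coord a 3 /\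
  0 <= coord a 2 + coord a 3 /\ 0 <= coord a 0 + coord a 4 /\ 0 <= coord a 0 + coord a 5 /\
  coord a 0 + coord a 1 + coord a 2 + coord a 3 + coord a 4 + coord a 5 = m.

Lemma sum_row6 a :
  \sum_(i < 6) a 0 i = coord a 0 + coord a 1 + coord a 2 + coord a 3 + coord a 4 + coord a 5.
Proof.
rewrite (eq_bigr (fun i : 'I_6 => coord a i)) => [|i _]; last by rewrite /coord inord_val.
by rewrite -(big_mkord xpredT (coord a)) unlock /= addr0 !addrA.
Qed.

Lemma P_IV_cone1 a : P_IV a <-> cone_IV 1 a.
Proof.
rewrite /P_IV sum_row6; split.
  move=> [h45 h123 h04 h05 hsum].
  by do !split=> //; apply: h123; rewrite ?inordK.
move=> [h45 [h12 [h13 [h23 [h04 [h05 hsum]]]]]].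
split=> // r q r_ge1 r_lt_q q_le3; rewrite -[r]inord_val -[q]inord_val.
have: r = 1 :> nat /\ q = 2 :> nat \/ r = 1 :> nat /\ q = 3 :> nat \/
      r = 2 :> nat /\ q = 3 :> nat by lia.
by case=> [[-> ->] | [[-> ->] | [-> ->]]].
Qed.

Lemma cone_IV0 a : cone_IV 0 a -> a = 0.
Proof.
move=> [h45 [h12 [h13 [h23 [h04 [h05 hsum]]]]]].
by apply: eq_row6; rewrite [RHS]/coord mxE; lra.
Qed.

Lemma cone_IV_scale (m : R) a : 0 < m -> cone_IV m a -> P_IV (m^-1 *: a).
Proof.
move=> m_gt0 [h45 [h12 [h13 [h23 [h04 [h05 hsum]]]]]].
have minv_ge0 : 0 <= m^-1 by rewrite invr_ge0 ltW.
apply/P_IV_cone1; rewrite /cone_IV !coordZ -!mulrDr.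
split; first by rewrite ler_pdivlMl // mulr1.
do 5 (split; first exact: mulr_ge0).
by rewrite hsum mulVf ?gt_eqF.
Qed.

Lemma P_IV_permute s a : block_perm s -> P_IV a -> P_IV (permute s a).
Proof.
move=> /block_permE bs [h45 h123 h04 h05 hsum].
have fix0 : coord (permute s a) 0 = coord a 0.
  rewrite coord_permute; congr (coord a _).
  by have := bs (inord 0); rewrite /block_of inordK //; lia.
have swap45 : coord (permute s a) 4 = coord a 4 /\ coord (permute s a) 5 = coord a 5 \/
              coord (permute s a) 4 = coord a 5 /\ coord (permute s a) 5 = coord a 4.
  have s4_neq_s5 : (s (inord 4) : nat) != s (inord 5).
    by rewrite val_eqE (inj_eq perm_inj) -val_eqE /= !inordK.
  have := bs (inord 4); have := bs (inord 5).
  have := ltn_ord (s (inord 4)); have := ltn_ord (s (inord 5)).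
  rewrite !coord_permute /block_of !inordK //.
  set u := nat_of_ord (s (inord 4)); set v := nat_of_ord (s (inord 5)) => *.
  have [[-> ->]|[-> ->]] : (u = 4 /\ v = 5 \/ u = 5 /\ v = 4)%N by lia.
    by left.
  by right.
split.
- by case: swap45 => -[-> ->]; rewrite // addrC.
- move=> r q r_ge1 r_lt_q q_le3; rewrite !mxE.
  have sr_neq_sq : s r != s q by rewrite (inj_eq perm_inj) -val_eqE neq_ltn r_lt_q.
  have := bs r; have := bs q; rewrite /block_of.
  case: (ltngtP (s r) (s q)) => [sr_lt_sq|sq_lt_sr|/val_inj sr_eq_sq] *.
  + by apply: h123; lia.
  + by rewrite addrC; apply: h123; lia.
  + by rewrite sr_eq_sq eqxx in sr_neq_sq.
- by rewrite fix0; case: swap45 => -[-> _].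
- by rewrite fix0; case: swap45 => -[_ ->].
- rewrite -hsum [RHS](reindex_inj (@perm_inj _ s)).
  by apply: eq_bigr => i _; rewrite mxE.
Qed.

Lemma vertex_permute s x : block_perm s -> is_vertex P_IV x -> is_vertex P_IV (permute s x).
Proof.
move=> bs [Px x_extreme]; split; first exact: P_IV_permute.
move=> y z t Py Pz t_gt0 t_lt1 sx_eq.
have bsV := block_permV bs.
suff: permute s^-1%g y = permute s^-1%g z by move=> /(congr1 (permute s)); rewrite !permuteKV.
apply: (x_extreme _ _ t) => //; try exact: P_IV_permute.
by rewrite -[x](permuteK s) sx_eq permuteD !permuteZ.
Qed.

Lemma convex_comb_eq0 (t u v : R) : 0 < t -> t < 1 -> 0 <= u -> 0 <= v ->
  t * u + (1 - t) * v = 0 -> u = 0 /\ v = 0.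
Proof.
move=> t_gt0 t_lt1 u_ge0 v_ge0 /eqP.
have tu_ge0 : 0 <= t * u by rewrite mulr_ge0 // ltW.
have tv_ge0 : 0 <= (1 - t) * v by rewrite mulr_ge0 // subr_ge0 ltW.
have t1_gt0 : 0 < 1 - t by rewrite subr_gt0.
rewrite paddr_eq0 // !mulf_eq0 (gt_eqF t_gt0) (gt_eqF t1_gt0) /=.
by case/andP=> /eqP-> /eqP->.
Qed.

Lemma exposed_vertex (P : 'rV[R]_6 -> Prop) (f : 'rV[R]_6 -> R) x :
  (forall y z (t : R), f (t *: y + (1 - t) *: z) = t * f y + (1 - t) * f z) ->
  P x -> f x = 0 -> (forall y, P y -> 0 <= f y) -> (forall y, P y -> f y = 0 -> y = x) ->
  is_vertex P x.
Proof.
move=> f_affine Px fx0 f_ge0 f_eq0; split=> // y z t Py Pz t_gt0 t_lt1 x_eq.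
have f_comb : t * f y + (1 - t) * f z = 0 by rewrite -f_affine -x_eq.
have [fy0 fz0] := convex_comb_eq0 t_gt0 t_lt1 (f_ge0 _ Py) (f_ge0 _ Pz) f_comb.
by rewrite (f_eq0 y Py fy0) (f_eq0 z Pz fz0).
Qed.

Lemma vertex_v1 : is_vertex P_IV (v1 : 'rV[R]_6).
Proof.
apply: (@exposed_vertex _ (fun y => (coord y 1 + coord y 2) + (coord y 1 + coord y 3) +
  (coord y 2 + coord y 3) + (coord y 0 + coord y 4) + (coord y 4 + coord y 5 - 1))).
- by move=> y z c; rewrite !coordD !coordZ; ring.
- by apply/P_IV_cone1; rewrite /cone_IV /v1 !coord_mkpt //=; lra.
- by rewrite /v1 !coord_mkpt //=; lra.
- by move=> y /P_IV_cone1 [? [? [? [? [? [? ?]]]]]]; lra.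
- move=> y /P_IV_cone1 [? [? [? [? [? [? ?]]]]]] fy0.
  by apply: eq_row6; rewrite /v1 coord_mkpt //=; lra.
Qed.

Lemma vertex_v2 : is_vertex P_IV (v2 : 'rV[R]_6).
Proof.
apply: (@exposed_vertex _ (fun y => (coord y 1 + coord y 2) + (coord y 1 + coord y 3) +
  (coord y 0 + coord y 4) + (coord y 0 + coord y 5) + (coord y 4 + coord y 5 - 1))).
- by move=> y z c; rewrite !coordD !coordZ; ring.
- by apply/P_IV_cone1; rewrite /cone_IV /v2 !coord_mkpt //=; lra.
- by rewrite /v2 !coord_mkpt //=; lra.
- by move=> y /P_IV_cone1 [? [? [? [? [? [? ?]]]]]]; lra.
- move=> y /P_IV_cone1 [? [? [? [? [? [? ?]]]]]] fy0.
  by apply: eq_row6; rewrite /v2 coord_mkpt //=; lra.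
Qed.

Lemma vertex_v3 : is_vertex P_IV (v3 : 'rV[R]_6).
Proof.
apply: (@exposed_vertex _ (fun y => (coord y 1 + coord y 2) + (coord y 1 + coord y 3) +
  (coord y 2 + coord y 3) + (coord y 0 + coord y 4) + (coord y 0 + coord y 5))).
- by move=> y z c; rewrite !coordD !coordZ; ring.
- by apply/P_IV_cone1; rewrite /cone_IV /v3 !coord_mkpt //=; lra.
- by rewrite /v3 !coord_mkpt //=; lra.
- by move=> y /P_IV_cone1 [? [? [? [? [? [? ?]]]]]]; lra.
- move=> y /P_IV_cone1 [? [? [? [? [? [? ?]]]]]] fy0.
  by apply: eq_row6; rewrite /v3 coord_mkpt //=; lra.
Qed.

Lemma vertex_peel (P : 'rV[R]_6 -> Prop) x w (l : R) :
  is_vertex P x -> P w -> 0 < l -> l < 1 -> P ((1 - l)^-1 *: (x - l *: w)) -> x = w.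
Proof.
move=> [_ x_extreme] Pw l_gt0 l_lt1 Pz.
have l1_neq0 : 1 - l != 0 by rewrite subr_eq0 eq_sym lt_eqF.
have x_eq : x = l *: w + (1 - l) *: ((1 - l)^-1 *: (x - l *: w)).
  by rewrite scalerA mulfV // scale1r [RHS]addrC subrK.
have w_eq_z := x_extreme _ _ _ Pw Pz l_gt0 l_lt1 x_eq.
by rewrite x_eq -w_eq_z -scalerDl addrC subrK scale1r.
Qed.

Lemma vertex_eq_of_cone x w (l : R) : is_vertex P_IV x -> P_IV w -> 0 < l -> l <= 1 ->
  cone_IV (1 - l) (x - l *: w) -> x = w.
Proof.
move=> Vx Pw l_gt0; rewrite le_eqVlt => /orP[/eqP l1 | l_lt1] hx.
  by move: hx; rewrite l1 subrr scale1r => /cone_IV0 /eqP; rewrite subr_eq0 => /eqP.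
apply: (vertex_peel Vx Pw l_gt0 l_lt1); apply: cone_IV_scale hx.
by rewrite subr_gt0.
Qed.

Lemma vertex_sorted x : is_vertex P_IV x ->
  coord x 1 <= coord x 2 -> coord x 1 <= coord x 3 -> coord x 4 <= coord x 5 ->
  x = v1 \/ x = v2 \/ x = v3.
Proof.
move=> Vx h12 h13 h45; have /P_IV_cone1 [? [? [? [? [? [? ?]]]]]] := Vx.1.
have [l_gt0|l_le0] := ltrP 0 (coord x 2 + coord x 3).
  right; left; apply: (vertex_eq_of_cone Vx vertex_v2.1 l_gt0); first lra.
  by rewrite /cone_IV !coordB !coordZ /v2 !coord_mkpt //=; lra.
have [l_gt0|l_le0'] := ltrP 0 (coord x 0 + coord x 5).
  left; apply: (vertex_eq_of_cone Vx vertex_v1.1 l_gt0); first lra.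
  by rewrite /cone_IV !coordB !coordZ /v1 !coord_mkpt //=; lra.
have l_gt0 : 0 < coord x 4 + coord x 5 - 1 by lra.
right; right; apply: (vertex_eq_of_cone Vx vertex_v3.1 l_gt0); first lra.
by rewrite /cone_IV !coordB !coordZ /v3 !coord_mkpt //=; lra.
Qed.

Definition orbit_IV x : Prop := exists s, block_perm s /\
  (x = permute s v1 \/ x = permute s v2 \/ x = permute s v3).

Lemma orbit_IV_vertex x : orbit_IV x -> is_vertex P_IV x.
Proof.
case=> s [bs [->|[->|->]]]; apply: vertex_permute bs _.
- exact: vertex_v1.
- exact: vertex_v2.
- exact: vertex_v3.
Qed.

Lemma orbit_IV_permute s x : block_perm s -> orbit_IV (permute s x) -> orbit_IV x.
Proof.
move=> bs [t [bt orbit_eq]]; exists (s^-1 * t)%g.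
split; first exact: block_permM (block_permV bs) bt.
by rewrite -(permuteK s x) -!permuteM; case: orbit_eq => [->|[->|->]]; auto.
Qed.

Lemma vertex_orbit_IV x : is_vertex P_IV x -> orbit_IV x.
Proof.
have b45 : block_perm (tperm (inord 4) (inord 5)).
  by apply: block_perm_tperm; rewrite /block_of !inordK.
have b12 : block_perm (tperm (inord 1) (inord 2)).
  by apply: block_perm_tperm; rewrite /block_of !inordK.
have b13 : block_perm (tperm (inord 1) (inord 3)).
  by apply: block_perm_tperm; rewrite /block_of !inordK.
wlog h45 : x / coord x 4 <= coord x 5.
  move=> sorted Vx; have [h45|h54] := lerP (coord x 4) (coord x 5); first exact: sorted.
  apply: (orbit_IV_permute b45); apply: sorted; last exact: vertex_permute.
  by rewrite !coord_permute_tperm //=; exact: ltW.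
wlog h123 : x h45 / coord x 1 <= coord x 2 /\ coord x 1 <= coord x 3.
  move=> sorted Vx.
  have [m23|m32] := lerP (coord x 2) (coord x 3).
    have [m12|m21] := lerP (coord x 1) (coord x 2); first by apply: sorted => //; lra.
    apply: (orbit_IV_permute b12); apply: sorted; last exact: vertex_permute.
      by rewrite !coord_permute_tperm.
    by rewrite !coord_permute_tperm //=; lra.
  have [m13|m31] := lerP (coord x 1) (coord x 3); first by apply: sorted => //; lra.
  apply: (orbit_IV_permute b13); apply: sorted; last exact: vertex_permute.
    by rewrite !coord_permute_tperm.
  by rewrite !coord_permute_tperm //=; lra.
move=> Vx; exists 1%g; split; first exact: block_perm1.
by rewrite !permute1; case: h123 => h12 h13; exact: vertex_sorted.
Qed.

End P_IV_vertices.

Theorem lemmaA7 (R : realFieldType) (x : 'rV[R]_6) :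
  is_vertex P_IV x <->
  exists s : 'S_6, block_perm s /\
    (x = permute s v1 \/ x = permute s v2 \/ x = permute s v3).
Proof. by split; [exact: vertex_orbit_IV | exact: orbit_IV_vertex]. Qed.
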